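(* Let $n\in\{1,\dots,5\}$. Every homogeneous invariant $F\in K[X_n]^{G_n}$ of degree $d$ is an invariant of weight $k$, where $d=k$ if $n=1,2,3$, $d=2k$ if $n=4$, and $d=5k$ if $n=5$. In particular $K[X_n]^{G_n}=\bigoplus_{k\ge0}K[X_n]^{G_n}_k$, where $K[X_n]^{G_n}_k$ is the space of invariants of weight $k$.
   Context: Let $K$ be a perfect field with algebraic closure $\overline K$. Genus one models and groups: (n=1) $\phi=(a_1,a_2,a_3,a_4,a_6)$, model $y^2+a_1xy+a_3y=x^3+a_2x^2+a_4x+a_6$; $\mathcal G_1$ consists of $[u;r,s,t]$, $u\ne0$, acting by substituting $x=u^2x'+r$, $y=u^3y'+u^2sx'+t$ and dividing by $u^6$; $\det[u;r,s,t]=u^{-1}$. (n=2) $\phi=(p,q)$, $p=\alpha_0x^2+\alpha_1xz+\alpha_2z^2$, $q=ax^4+bx^3z+cx^2z^2+dxz^3+ez^4$, model $y^2+p(x,z)y=q(x,z)$; $\mathcal G_2$ consists of $[\mu,r,B]$, acting by substituting $x=B_{11}x'+B_{21}z'$, $z=B_{12}x'+B_{22}z'$, $y=\mu^{-1}y'+r_0x'^2+r_1x'z'+r_2z'^2$ and multiplying by $\mu^2$; $\det=\mu\det B$. (n=3) ternary cubic $f$; $\mathcal G_3=\mathbb G_m\times\mathrm{GL}_3$, $[\mu,B]f=\mu f$ after substituting $x_j=\sum_iB_{ij}x_i'$; $\det=\mu\det B$. (n=4) pair of quadratic forms $\phi=(q_1,q_2)^T$ in 4 variables; $\mathcal G_4=\mathrm{GL}_2\times\mathrm{GL}_4$,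 $[A,B]$: $\phi\mapsto A\phi$ with $x_j=\sum_iB_{ij}x_i'$; $\det=\det A\det B$. (n=5) $5\times5$ alternating matrix $\phi$ of linear forms in 5 variables; $\mathcal G_5=\mathrm{GL}_5\times\mathrm{GL}_5$, $[A,B]$: $\phi\mapsto A\phi A^T$ with $x_j=\sum_iB_{ij}x_i'$; $\det=(\det A)^2\det B$. $G_n$ is the commutator subgroup: $G_1=\{[1;r,s,t]\}$, $G_2=\{[1,r,B]:B\in\mathrm{SL}_2\}$, $G_3=\mathrm{SL}_3$, $G_4=\mathrm{SL}_2\times\mathrm{SL}_4$, $G_5=\mathrm{SL}_5\times\mathrm{SL}_5$. $K[X_n]$ is the polynomial ring in the coefficients, graded by $\deg a_i=i$ ($n=1$), $\deg\alpha_i=1$, $\deg a=\dots=\deg e=2$ ($n=2$), and usual degree for $n=3,4,5$. $K[X_n]^{G_n}=\{F:F\circ g=F\ \forall g\in G_n(\overline K)\}$; $F$ is an invariant of weight $k$ if $F\circ g=(\det g)^kF$ for all $g\in\mathcal G_n(\overline K)$. *)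

From HB Require Import structures.
From mathcomp Require Import all_boot all_algebra.
From mathcomp Require Import mpoly.

Set Implicit Arguments.
Unset Strict Implicit.
Unset Printing Implicit Defensive.

Import GRing.Theory.
Local Open Scope ring_scope.

Definition wdeg (N : nat) (w : 'I_N -> nat) (m : 'X_{1..N}) : nat :=
  (\sum_(i < N) w i * m i)%N.

Lemma wdeg0 N (w : 'I_N -> nat) : wdeg w 0%MM = 0%N.
Proof. by rewrite /wdeg big1 // => i _; rewrite mnm0E muln0. Qed.

Lemma wdegD N (w : 'I_N -> nat) :
  {morph wdeg w : m1 m2 / (m1 + m2)%MM >-> (m1 + m2)%N}.
Proof.
by move=> m1 m2; rewrite /wdeg -big_split; apply: eq_bigr => i _;
  rewrite mnmDE mulnDr.
Qed.

HB.instance Definition _ N (w : 'I_N -> nat) :=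
  isMeasure.Build N (wdeg w) (wdeg0 w) (wdegD w).

Definition wmeasure N (w : 'I_N -> nat) : measure N := Measure.clone N (wdeg w) _.

Notation o i := (inord i).

Definition mnm (k : nat) (s : seq nat) : 'X_{1..k} :=
  [multinom nth 0%N s i | i < k].

Definition lsubst (R : nzRingType) (k : nat) (B : 'M[R]_k) :
    k.-tuple {mpoly R[k]} :=
  [tuple \sum_(i < k) (B i j)%:MP * 'X_i | j < k].

Definition perfect_field (K : fieldType) : Prop :=
  forall p : nat, p \in [pchar K] -> forall x : K, exists y : K, y ^+ p = x.

Definition algebraic_over (K L : fieldType) (iota : {rmorphism K -> L}) : Prop :=
  forall x : L, exists p : {poly K}, p != 0 /\ root (map_poly iota p) x.

Section Models.
Variable L : fieldType.

(* coordinates (a1,a2,a3,a4,a6) = a 0, .., a 4 ; variables x = 'X_0, y = 'X_1 *)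
Definition W1 (a : 'I_5 -> L) : {mpoly L[2]} :=
  let x : {mpoly L[2]} := 'X_(o 0) in let y : {mpoly L[2]} := 'X_(o 1) in
  y ^+ 2 + (a (o 0))%:MP * x * y + (a (o 2))%:MP * y
  - (x ^+ 3 + (a (o 1))%:MP * x ^+ 2 + (a (o 3))%:MP * x + (a (o 4))%:MP).

Record grp1 := G1 { g1u : L; g1r : L; g1s : L; g1t : L }.

Definition act1 (g : grp1) (a : 'I_5 -> L) : 'I_5 -> L :=
  let x : {mpoly L[2]} := 'X_(o 0) in let y : {mpoly L[2]} := 'X_(o 1) in
  let: G1 u r s t := g in
  let W' := (u ^- 6) *: (W1 a \mPo
       [tuple (u ^+ 2)%:MP * x + r%:MP;
              (u ^+ 3)%:MP * y + (u ^+ 2 * s)%:MP * x + t%:MP]) in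
  fun i => nth 0 [:: W'@_(mnm 2 [:: 1; 1]%N); - W'@_(mnm 2 [:: 2]%N);
                    W'@_(mnm 2 [:: 0; 1]%N); - W'@_(mnm 2 [:: 1]%N);
                    - W'@_(mnm 2 [::])] i.

Definition big1 (g : grp1) : bool := g1u g != 0.
Definition comm1 (g : grp1) : bool := g1u g == 1.
Definition det1 (g : grp1) : L := (g1u g)^-1.

(* coordinates (alpha0,alpha1,alpha2,a,b,c,d,e) = a 0, .., a 7 ;
   variables x = 'X_0, z = 'X_1, y = 'X_2 *)
Definition W2 (a : 'I_8 -> L) : {mpoly L[3]} :=
  let x : {mpoly L[3]} := 'X_(o 0) in let z : {mpoly L[3]} := 'X_(o 1) in
  let y : {mpoly L[3]} := 'X_(o 2) in
  y ^+ 2 + ((a (o 0))%:MP * x ^+ 2 + (a (o 1))%:MP * x * z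
            + (a (o 2))%:MP * z ^+ 2) * y
  - ((a (o 3))%:MP * x ^+ 4 + (a (o 4))%:MP * x ^+ 3 * z
     + (a (o 5))%:MP * x ^+ 2 * z ^+ 2 + (a (o 6))%:MP * x * z ^+ 3
     + (a (o 7))%:MP * z ^+ 4).

Record grp2 := G2 { g2mu : L; g2r0 : L; g2r1 : L; g2r2 : L; g2B : 'M[L]_2 }.

Definition act2 (g : grp2) (a : 'I_8 -> L) : 'I_8 -> L :=
  let x : {mpoly L[3]} := 'X_(o 0) in let z : {mpoly L[3]} := 'X_(o 1) in
  let y : {mpoly L[3]} := 'X_(o 2) in
  let: G2 mu r0 r1 r2 B := g in
  let W' := (mu ^+ 2) *: (W2 a \mPo
       [tuple (B (o 0) (o 0))%:MP * x + (B (o 1) (o 0))%:MP * z;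
              (B (o 0) (o 1))%:MP * x + (B (o 1) (o 1))%:MP * z;
              (mu^-1)%:MP * y + r0%:MP * x ^+ 2 + r1%:MP * x * z
                + r2%:MP * z ^+ 2]) in
  fun i => nth 0 [:: W'@_(mnm 3 [:: 2; 0; 1]%N); W'@_(mnm 3 [:: 1; 1; 1]%N);
                    W'@_(mnm 3 [:: 0; 2; 1]%N); - W'@_(mnm 3 [:: 4; 0; 0]%N);
                    - W'@_(mnm 3 [:: 3; 1; 0]%N); - W'@_(mnm 3 [:: 2; 2; 0]%N);
                    - W'@_(mnm 3 [:: 1; 3; 0]%N); - W'@_(mnm 3 [:: 0; 4; 0]%N)] i.

Definition big2 (g : grp2) : bool := (g2mu g != 0) && (g2B g \in unitmx).
Definition comm2 (g : grp2) : bool := (g2mu g == 1) && (\det (g2B g) == 1).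
Definition det2 (g : grp2) : L := g2mu g * \det (g2B g).

Definition mons3 : seq (seq nat) :=
  [:: [:: 3; 0; 0]; [:: 0; 3; 0]; [:: 0; 0; 3]; [:: 2; 1; 0]; [:: 2; 0; 1];
      [:: 1; 2; 0]; [:: 0; 2; 1]; [:: 1; 0; 2]; [:: 0; 1; 2]; [:: 1; 1; 1]]%N.

Definition cubic (a : 'I_10 -> L) : {mpoly L[3]} :=
  \sum_(i < 10) (a i)%:MP * 'X_[mnm 3 (nth [::] mons3 i)].

Record grp3 := G3 { g3mu : L; g3B : 'M[L]_3 }.

Definition act3 (g : grp3) (a : 'I_10 -> L) : 'I_10 -> L :=
  let f' := g3mu g *: (cubic a \mPo lsubst (g3B g)) in
  fun i => f'@_(mnm 3 (nth [::] mons3 i)).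

Definition big3 (g : grp3) : bool := (g3mu g != 0) && (g3B g \in unitmx).
Definition comm3 (g : grp3) : bool := (g3mu g == 1) && (\det (g3B g) == 1).
Definition det3 (g : grp3) : L := g3mu g * \det (g3B g).

(* the 10 quadratic monomials in 4 variables;
   coordinate 10*l + m is the coefficient of monomial m in q_(l+1) *)
Definition mons4 : seq (seq nat) :=
  [:: [:: 2; 0; 0; 0]; [:: 0; 2; 0; 0]; [:: 0; 0; 2; 0]; [:: 0; 0; 0; 2];
      [:: 1; 1; 0; 0]; [:: 1; 0; 1; 0]; [:: 1; 0; 0; 1]; [:: 0; 1; 1; 0];
      [:: 0; 1; 0; 1]; [:: 0; 0; 1; 1]]%N.

Definition qform (a : 'I_20 -> L) (l : nat) : {mpoly L[4]} :=
  \sum_(m < 10) (a (inord (10 * l + m)))%:MP * 'X_[mnm 4 (nth [::] mons4 m)].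

Record grp4 := G4 { g4A : 'M[L]_2; g4B : 'M[L]_4 }.

Definition act4 (g : grp4) (a : 'I_20 -> L) : 'I_20 -> L :=
  fun c =>
    (\sum_(j < 2) (g4A g (inord (c %/ 10)) j)%:MP * (qform a j \mPo lsubst (g4B g)))
      @_(mnm 4 (nth [::] mons4 (c %% 10))).

Definition big4 (g : grp4) : bool := (g4A g \in unitmx) && (g4B g \in unitmx).
Definition comm4 (g : grp4) : bool := (\det (g4A g) == 1) && (\det (g4B g) == 1).
Definition det4 (g : grp4) : L := \det (g4A g) * \det (g4B g).

(* the 10 positions (i,j), i < j, of a 5x5 alternating matrix;
   coordinate 5*p + k is the coefficient of x_k in the entry at position p *)
Definition pairs5 : seq (nat * nat) :=
  [:: (0,1); (0,2); (0,3); (0,4); (1,2); (1,3); (1,4); (2,3); (2,4); (3,4)]%N.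

Definition linf (a : 'I_50 -> L) (p : nat) : {mpoly L[5]} :=
  \sum_(k < 5) (a (inord (5 * p + k)))%:MP * 'X_k.

Definition altmx (a : 'I_50 -> L) : 'M[{mpoly L[5]}]_5 :=
  \matrix_(i < 5, j < 5)
    if (i < j)%N then linf a (index (val i, val j) pairs5)
    else if (j < i)%N then - linf a (index (val j, val i) pairs5)
    else 0.

Record grp5 := G5 { g5A : 'M[L]_5; g5B : 'M[L]_5 }.

Definition act5 (g : grp5) (a : 'I_50 -> L) : 'I_50 -> L :=
  fun c =>
    let A : 'M[{mpoly L[5]}]_5 := map_mx (fun e => e%:MP) (g5A g) in
    let M := A *m map_mx (comp_mpoly (lsubst (g5B g))) (altmx a) *m A^T in
    let pr := nth (0, 0)%N pairs5 (c %/ 5) in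
    (M (inord pr.1) (inord pr.2))@_(U_(inord (c %% 5)))%MM.

Definition big5 (g : grp5) : bool := (g5A g \in unitmx) && (g5B g \in unitmx).
Definition comm5 (g : grp5) : bool := (\det (g5A g) == 1) && (\det (g5B g) == 1).
Definition det5 (g : grp5) : L := \det (g5A g) ^+ 2 * \det (g5B g).

(* The data attached to n: number N of coefficients, weights of the
   coefficients, parameter type for group elements, membership in
   calG_n(L) and in G_n(L), the determinant, the action on X_n(L) = L^N,
   and the ratio r with d = r k. *)
Record gsetting := GSetting {
  gs_N : nat;
  gs_w : 'I_gs_N -> nat;
  gs_grp : Type;
  gs_big : gs_grp -> bool;
  gs_comm : gs_grp -> bool;
  gs_det : gs_grp -> L;
  gs_act : gs_grp -> ('I_gs_N -> L) -> ('I_gs_N -> L);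
  gs_r : nat }.

Definition weights1 (i : 'I_5) : nat := nth 0%N [:: 1; 2; 3; 4; 6]%N i.
Definition weights2 (i : 'I_8) : nat := nth 0%N [:: 1; 1; 1; 2; 2; 2; 2; 2]%N i.

Definition setting (n : nat) : gsetting :=
  match n with
  | 1 => @GSetting 5 weights1 grp1 big1 (fun g => big1 g && comm1 g) det1 act1 1
  | 2 => @GSetting 8 weights2 grp2 big2 (fun g => big2 g && comm2 g) det2 act2 1
  | 3 => @GSetting 10 (fun _ => 1%N) grp3 big3 (fun g => big3 g && comm3 g) det3 act3 1
  | 4 => @GSetting 20 (fun _ => 1%N) grp4 big4 (fun g => big4 g && comm4 g) det4 act4 2
  | _ => @GSetting 50 (fun _ => 1%N) grp5 big5 (fun g => big5 g && comm5 g) det5 act5 5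
  end.

End Models.

(* Invariants.  F : {mpoly K[N]} is a polynomial in the coefficients;
   F o g is evaluated on X_n(Kbar) = Kbar^N. *)
Section Invariants.
Variables (K : fieldType) (L : fieldType) (iota : {rmorphism K -> L}).
Variable S : gsetting L.

Definition is_Ginv (F : {mpoly K[gs_N S]}) : Prop :=
  forall g : gs_grp S, gs_comm g -> forall a : 'I_(gs_N S) -> L,
    (map_mpoly iota F).@[gs_act g a] = (map_mpoly iota F).@[a].

Definition is_weight_inv (k : nat) (F : {mpoly K[gs_N S]}) : Prop :=
  forall g : gs_grp S, gs_big g -> forall a : 'I_(gs_N S) -> L,
    (map_mpoly iota F).@[gs_act g a] = gs_det g ^+ k * (map_mpoly iota F).@[a].

End Invariants.

Arguments is_Ginv {K L} iota S F.
Arguments is_weight_inv {K L} iota S k F.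
Arguments gs_w {L} g _.

(* Let a scalar c act on a model by multiplying each coefficient by c raised to its
   weight.  Every g in calG_n acts as an element h of G_n followed by the scalar action of
   some c with c ^ r = det g, where r = 1, 1, 1, 2, 5: for n = 1, 2 this is read off the
   formulas, for n = 3, 4, 5 one takes roots of the determinants of the matrices.  So a
   G_n-invariant F of weighted degree d satisfies F o g = c ^ d F = (det g) ^ (d / r) F as
   soon as r divides d.  For n = 4, 5 the divisibility comes from diagonal one-parameter
   subgroups h_s of G_n for which s ^ rho (h_s a) is polynomial in s ^ r, with rho prime
   to r: then F(a) s ^ (rho d) is a polynomial in s ^ r, so F = 0 unless r divides d.
   The scalar action normalises G_n, hence the homogeneous components of an invariant are
   invariants, and invariants of distinct weights are independent because det maps calG_n
   onto the units. *)

From Pilot Require Import Defs.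
From HB Require Import structures.
From mathcomp Require Import all_boot all_algebra.
From mathcomp Require Import mpoly.
From mathcomp Require Import ring.

Set Implicit Arguments.
Unset Strict Implicit.
Unset Printing Implicit Defensive.

Import GRing.Theory.
Local Open Scope ring_scope.

Section ClosedFieldPolynomials.
Variable L : closedFieldType.

Lemma closed_field_root (r : nat) (x : L) : (0 < r)%N -> exists y : L, y ^+ r = x.
Proof.
move=> r_gt0; have [y yE] := solve_monicpoly (fun i => (i == 0)%:R * x) r_gt0.
exists y; rewrite yE (bigD1 (Ordinal r_gt0)) //= big1 => [|i /negbTE].
  by rewrite mul1r mulr1 addr0.
by rewrite -val_eqE /= => ->; rewrite !mul0r.
Qed.

Lemma poly_eq0_on_units (p : {poly L}) : (forall x, x != 0 -> p.[x] = 0) -> p = 0.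
Proof.
move=> p0; apply/eqP; apply: contraT => p_neq0.
have /closed_nonrootP[x] : p * 'X != 0 by rewrite mulf_neq0 ?polyX_eq0.
by rewrite rootE hornerMX; have [->|/p0->] := eqVneq x 0; rewrite ?mulr0 ?mul0r eqxx.
Qed.

Lemma sum_monomials_eq0 (M : nat) (c : nat -> L) :
    (forall t, t != 0 -> \sum_(k < M) c k * t ^+ k = 0) ->
  forall k, (k < M)%N -> c k = 0.
Proof.
move=> c0 k k_lt_M; have P0 : \poly_(k < M) c k = 0.
  by apply: poly_eq0_on_units => t /c0; rewrite horner_poly.
by have := congr1 (coefp k) P0; rewrite /= coef_poly k_lt_M coef0.
Qed.

Lemma horner_exp_monomial_eq0 (Q : {poly L}) (r D : nat) (c : L) :
    (0 < r)%N -> ~~ (r %| D)%N ->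
    (forall s, s != 0 -> Q.[s ^+ r] = c * s ^+ D) -> c = 0.
Proof.
move=> r_gt0 r_ndvd_D QE.
have P0 : Q \Po 'X^r - c *: 'X^D = 0.
  apply: poly_eq0_on_units => s /QE.
  by rewrite !hornerE horner_comp hornerXn => ->; rewrite subrr.
have := congr1 (coefp D) P0.
rewrite /= coefB coef_comp_poly_Xn // (negbTE r_ndvd_D) coefZ coefXn eqxx mulr1 coef0 sub0r.
by move/eqP; rewrite oppr_eq0 => /eqP.
Qed.

End ClosedFieldPolynomials.

Section LastVariable.
Variables (R : comNzRingType) (N : nat).
Local Notation widen := (widen_ord (leqnSn N)).

Definition minit (m : 'X_{1..N.+1}) : 'X_{1..N} := [multinom m (widen i) | i < N].

Definition extend_last (a : 'I_N -> R) (x : R) : 'I_N.+1 -> R :=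
  fun i => if unlift ord_max i is Some j then a j else x.

Lemma extend_last_widen a x (i : 'I_N) : extend_last a x (widen i) = a i.
Proof.
rewrite /extend_last; case: unliftP => [j /eqP|/eqP].
  by rewrite eqE /= /bump leqNgt ltn_ord add0n => /eqP/val_inj ->.
by rewrite -val_eqE /= ltn_eqF.
Qed.

Lemma extend_last_max a x : extend_last a x ord_max = x.
Proof. by rewrite /extend_last unlift_none. Qed.

Lemma minit_inj (m1 m2 : 'X_{1..N.+1}) :
  minit m1 = minit m2 -> m1 ord_max = m2 ord_max -> m1 = m2.
Proof.
move=> eq_init eq_last; apply/mnmP => i; case: (unliftP ord_max i) => [j ->|-> //].
have lift_j : lift ord_max j = widen j by apply/val_inj; rewrite /= /bump leqNgt ltn_ord.
by have := congr1 (fun m : 'X_{1..N} => m j) eq_init; rewrite !mnmE lift_j.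
Qed.

Lemma mlast_lt_msize (p : {mpoly R[N.+1]}) m : m \in msupp p -> (m ord_max < msize p)%N.
Proof.
by move/msize_mdeg_lt; apply: leq_ltn_trans; rewrite mdegE (bigD1 ord_max) ?leq_addr.
Qed.

Definition mslice (p : {mpoly R[N.+1]}) (j : nat) : {mpoly R[N]} :=
  \sum_(m <- msupp p | m ord_max == j) p@_m *: 'X_[minit m].

Lemma meval_extend_last p a x :
  p.@[extend_last a x] = \sum_(j < msize p) (mslice p j).@[a] * x ^+ j.
Proof.
rewrite mevalE; apply/esym.
under eq_bigr => j _ do rewrite raddf_sum /= mulr_suml big_mkcond /=.
rewrite exchange_big /=; apply: eq_big_seq => m m_p; apply/esym.
rewrite (bigD1 (Ordinal (mlast_lt_msize m_p))) //= eqxx [X in _ + X]big1 ?addr0; last first.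
  by move=> j ne_j; rewrite ifN //; apply: contra ne_j => /eqP e; apply/eqP/val_inj.
rewrite mevalZ mevalX big_ord_recr /= extend_last_max -mulrA; congr (_ * (_ * _)).
by apply: eq_bigr => i _; rewrite mnmE extend_last_widen.
Qed.

Lemma mcoeff_mslice p m : (mslice p (m ord_max))@_(minit m) = p@_m.
Proof.
rewrite raddf_sum /= -big_filter.
have [m_p|m_np] := boolP (m \in msupp p); last first.
  rewrite (memN_msupp_eq0 m_np) big_seq big1 // => m'; rewrite mem_filter.
  case/andP => /eqP e m'_p; rewrite mcoeffZ mcoeffX.
  by case: eqP => [/minit_inj/(_ e) eq_m|]; [move: m_np; rewrite -eq_m m'_p | rewrite mulr0].
rewrite (bigD1_seq m) ?filter_uniq ?msupp_uniq ?mem_filter ?eqxx ?m_p //=.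
rewrite mcoeffZ mcoeffX eqxx mulr1 big1_seq ?addr0 // => m' /andP[ne].
rewrite mem_filter => /andP[/eqP e _]; rewrite mcoeffZ mcoeffX.
by case: eqP => [/minit_inj/(_ e) eq_m|]; [rewrite eq_m eqxx in ne | rewrite mulr0].
Qed.

End LastVariable.

Lemma mpoly_eq0_of_meval (L : closedFieldType) N (p : {mpoly L[N]}) :
  (forall a, p.@[a] = 0) -> p = 0.
Proof.
elim: N p => [|N IH] p p0.
  have := p0 (fun _ => 0); rewrite [p]nvar0_mpolyC mevalC => ->.
  by rewrite mpolyC0.
have slice0 j : mslice p j = 0.
  apply: IH => a; have [j_lt|j_ge] := ltnP j (msize p); last first.
    rewrite /mslice big_seq_cond big1 ?meval0 // => m /andP[/mlast_lt_msize m_lt /eqP mj].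
    by rewrite mj ltnNge j_ge in m_lt.
  apply: (sum_monomials_eq0 (c := fun j => (mslice p j).@[a])) j_lt => x _.
  by rewrite -meval_extend_last.
by apply/mpolyP => m; rewrite -mcoeff_mslice slice0 !mcoeff0.
Qed.

Section WeightedScaling.
Variables (R : comNzRingType) (N : nat).
Implicit Types (p : {mpoly R[N]}) (e w : 'I_N -> nat).

Lemma prod_weighted_scale e (c : R) (a : 'I_N -> R) (m : 'X_{1..N}) :
  \prod_i (c ^+ e i * a i) ^+ m i = c ^+ (\sum_i e i * m i) * \prod_i a i ^+ m i.
Proof.
by rewrite -prodrXr -big_split; apply: eq_bigr => i _; rewrite exprMn -exprM.
Qed.

Lemma meval_weighted_scale w d p (c : R) a :
  p \is d.-homog for (wmeasure w) -> p.@[fun i => c ^+ w i * a i] = c ^+ d * p.@[a].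
Proof.
move/dhomogP => p_homog; rewrite !mevalE mulr_sumr; apply: eq_big_seq => m m_p.
by rewrite prod_weighted_scale mulrCA -(p_homog m m_p).
Qed.

Lemma meval_weighted_curve e (b : 'I_N -> R) p :
  exists Q : {poly R}, forall t, p.@[fun i => t ^+ e i * b i] = Q.[t].
Proof.
exists (\sum_(m <- msupp p) (p@_m * \prod_i b i ^+ m i) *: 'X^(\sum_i e i * m i)).
move=> t; rewrite mevalE horner_sum; apply: eq_bigr => m _.
by rewrite hornerZ hornerXn prod_weighted_scale mulrCA [LHS]mulrC.
Qed.

End WeightedScaling.

Section FieldExtension.
Variables (K : fieldType) (L : closedFieldType) (iota : {rmorphism K -> L}) (N : nat).
Implicit Type F : {mpoly K[N]}.

Lemma map_mpoly_dhomog (mf : measure N) d F :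
  F \is d.-homog for mf -> map_mpoly iota F \is d.-homog for mf.
Proof.
move/dhomogP => F_homog; apply/dhomogP => m.
by rewrite (perm_mem (msupp_map_mpoly _ (fmorph_inj iota))); apply: F_homog.
Qed.

Lemma map_mpoly_eq0_of_meval F : (forall a, (map_mpoly iota F).@[a] = 0) -> F = 0.
Proof.
move/mpoly_eq0_of_meval => F0; apply/mpolyP => m.
by apply/eqP; rewrite mcoeff0 -(fmorph_eq0 iota) -mcoeff_map_mpoly F0 mcoeff0.
Qed.

End FieldExtension.

Arguments map_mpoly_eq0_of_meval {K L} iota {N F}.

Lemma sum_multiples (V : nmodType) (r M : nat) (P : nat -> V) :
    (0 < r)%N -> (forall d, ~~ (r %| d)%N -> P d = 0) ->
  \sum_(d < r * M) P d = \sum_(k < M) P (r * k)%N.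
Proof.
move=> r_gt0 P0; elim: M => [|M IH]; first by rewrite muln0 !big_ord0.
rewrite big_ord_recr -IH /= mulnS addnC -!(big_mkord xpredT).
rewrite (big_cat_nat _ (leq_addr r _)) //=; congr (_ + _).
have rM_lt : (r * M < r * M + r)%N by rewrite -[X in (X < _)%N]addn0 ltn_add2l.
rewrite big_ltn // big1_seq ?addr0 // => d /andP[_].
rewrite mem_index_iota => /andP[lt_d d_lt].
apply: P0; rewrite -(subnK (ltnW lt_d)) (dvdn_addl _ (dvdn_mulr _ (dvdnn r))).
by rewrite gtnNdvd ?subn_gt0 // ltn_subLR // ltnW.
Qed.

(* [r] is the ratio [d / k] between degree and weight; the scalar [c] acts on the
   coefficient [i] of a model by [c ^+ gs_w S i]. *)
Record weighted_model (L : fieldType) (S : gsetting L) : Prop := WeightedModel {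
  weight_ratio_gt0 : (0 < gs_r S)%N;
  comm_unimodular : forall g : gs_grp S, gs_comm g -> gs_big g /\ gs_det g = 1;
  det_onto_units : forall t : L, t != 0 -> exists2 g : gs_grp S, gs_big g & gs_det g = t;
  scalar_comm_factorization : forall g : gs_grp S, gs_big g ->
    exists (c : L) (h : gs_grp S), [/\ gs_comm h, c ^+ gs_r S = gs_det g &
      forall a i, gs_act g a i = c ^+ gs_w S i * gs_act h a i];
  (* For r > 1: one-parameter families [h_s] in G_n on which the scaled orbit
     [s ^+ rho * h_s a] is a polynomial curve in [s ^+ r]. *)
  weight_ratio_divides : gs_r S = 1%N \/ exists2 rho, coprime rho (gs_r S) &
    forall a, exists e b, forall s : L, s != 0 -> exists2 h : gs_grp S, gs_comm h &
      forall i, (s ^+ rho) ^+ gs_w S i * gs_act h a i = (s ^+ gs_r S) ^+ e i * b i;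
  comm_scaling_conj : forall (h : gs_grp S) (c : L), gs_comm h -> c != 0 ->
    exists2 h' : gs_grp S, gs_comm h' &
    forall a i, gs_act h' (fun j => c ^+ gs_w S j * a j) i = c ^+ gs_w S i * gs_act h a i
}.

Section WeightDecomposition.
Variables (K : fieldType) (L : closedFieldType) (iota : {rmorphism K -> L}).
Variables (S : gsetting L) (WS : weighted_model S).
Local Notation N := (gs_N S).
Local Notation w := (gs_w S).
Local Notation r := (gs_r S).
Local Notation mf := (wmeasure w).
Local Notation "F ^iota" := (map_mpoly iota F) (at level 2, format "F ^iota").
Implicit Type F : {mpoly K[N]}.

Lemma map_meval_weighted_scale d F (c : L) x : F \is d.-homog for mf ->
  F^iota.@[fun i => c ^+ w i * x i] = c ^+ d * F^iota.@[x].
Proof. by move/(map_mpoly_dhomog iota)/meval_weighted_scale. Qed.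

Lemma weight_ratio_dvd_deg d F :
  F \is d.-homog for mf -> is_Ginv iota S F -> F != 0 -> (r %| d)%N.
Proof.
move=> F_homog F_inv; apply: contraTT => r_ndvd_d; apply/negPn/eqP.
have [r1|[rho rho_coprime curve]] := weight_ratio_divides WS.
  by rewrite r1 dvd1n in r_ndvd_d.
apply: (map_mpoly_eq0_of_meval iota) => a.
have [e [b curve_a]] := curve a; have [Q QE] := meval_weighted_curve e b F^iota.
apply: (horner_exp_monomial_eq0 (Q := Q) (weight_ratio_gt0 WS) (D := (rho * d)%N)).
  by rewrite Gauss_dvdr // coprime_sym.
move=> s s_neq0; have [h h_comm hE] := curve_a s s_neq0.
by rewrite -QE -(meval_eq _ hE) (map_meval_weighted_scale _ _ F_homog) F_inv // -exprM mulrC.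
Qed.

Lemma homog_Ginv_weight_inv k F :
  F \is (r * k).-homog for mf -> is_Ginv iota S F -> is_weight_inv iota S k F.
Proof.
move=> F_homog F_inv g g_big a.
have [c [h [h_comm cE actE]]] := scalar_comm_factorization WS g_big.
by rewrite (meval_eq _ (actE a)) (map_meval_weighted_scale _ _ F_homog) F_inv // exprM cE.
Qed.

Lemma homog_Ginv_weight d F : F \is d.-homog for mf -> is_Ginv iota S F -> F != 0 ->
  exists k, d = (r * k)%N /\ is_weight_inv iota S k F.
Proof.
move=> F_homog F_inv /(weight_ratio_dvd_deg F_homog F_inv) /dvdnP[k d_eq].
exists k; rewrite mulnC; split => //; apply: homog_Ginv_weight_inv => //.
by rewrite mulnC -d_eq.
Qed.

Lemma weight_inv_Ginv k F : is_weight_inv iota S k F -> is_Ginv iota S F.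
Proof.
move=> F_inv g g_comm a; have [g_big g_det] := comm_unimodular WS g_comm.
by rewrite F_inv // g_det expr1n mul1r.
Qed.

Lemma meval_scale_pihomog F D (c : L) x : (mmeasure mf F <= D)%N ->
  F^iota.@[fun i => c ^+ w i * x i] = \sum_(d < D) (pihomog mf d F)^iota.@[x] * c ^+ d.
Proof.
move=> F_le; rewrite {1}(pihomog_partitionE F_le) (raddf_sum (map_mpoly iota)) raddf_sum.
apply: eq_bigr => d _ /=.
by rewrite (map_meval_weighted_scale _ _ (pihomogP _ _ _)) mulrC.
Qed.

(* Scaling normalises G_n, so it permutes G_n-invariants; comparing coefficients of
   the scaling parameter separates the homogeneous components. *)
Lemma pihomog_Ginv d F : is_Ginv iota S F -> is_Ginv iota S (pihomog mf d F).
Proof.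
move=> F_inv h h_comm a; set D := (d + mmeasure mf F).+1.
have F_le : (mmeasure mf F <= D)%N by rewrite ltnW // ltnS leq_addl.
pose f d' := (pihomog mf d' F)^iota.@[gs_act h a] - (pihomog mf d' F)^iota.@[a].
suff /(_ d) : forall d', (d' < D)%N -> f d' = 0.
  by rewrite ltnS leq_addr => /(_ isT) /eqP; rewrite subr_eq0 => /eqP.
apply: sum_monomials_eq0 => c c_neq0.
have [h' h'_comm h'E] := comm_scaling_conj WS h_comm c_neq0.
under eq_bigr do rewrite mulrBl.
by rewrite sumrB -!meval_scale_pihomog // -(meval_eq _ (h'E a)) !F_inv // subrr.
Qed.

Lemma Ginv_weight_decomposition F : is_Ginv iota S F ->
  exists (M : nat) (Fk : nat -> {mpoly K[N]}),
    (forall k, is_weight_inv iota S k (Fk k)) /\ F = \sum_(k < M) Fk k.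
Proof.
move=> F_inv; exists (mmeasure mf F), (fun k => pihomog mf (r * k) F); split.
  by move=> k; apply: homog_Ginv_weight_inv (pihomogP _ _ _) (pihomog_Ginv _ F_inv).
have r_gt0 := weight_ratio_gt0 WS.
rewrite -(sum_multiples _ (P := fun d => pihomog mf d F)) //.
  by apply: pihomog_partitionE; rewrite leq_pmull.
move=> d r_ndvd_d; apply: contraNeq r_ndvd_d.
exact: weight_ratio_dvd_deg (pihomogP _ _ _) (pihomog_Ginv _ F_inv).
Qed.

Lemma weight_invs_independent (M : nat) (Fk : nat -> {mpoly K[N]}) :
  (forall k, is_weight_inv iota S k (Fk k)) ->
  \sum_(k < M) Fk k = 0 -> forall k, (k < M)%N -> Fk k = 0.
Proof.
move=> Fk_inv sum0 k k_lt; apply: (map_mpoly_eq0_of_meval iota) => a.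
apply: (sum_monomials_eq0 (c := fun k => (Fk k)^iota.@[a])) k_lt => t t_neq0.
have [g g_big <-] := det_onto_units WS t_neq0.
transitivity ((\sum_(k < M) Fk k)^iota.@[gs_act g a]); last by rewrite sum0 raddf0 meval0.
rewrite (raddf_sum (map_mpoly iota)) raddf_sum.
by apply: eq_bigr => j _ /=; rewrite Fk_inv // mulrC.
Qed.

End WeightDecomposition.

Section Substitutions.
Variable R : comNzRingType.

Lemma comp_mpolyA n k l (p : {mpoly R[n]}) (t1 : n.-tuple {mpoly R[k]})
    (t2 : k.-tuple {mpoly R[l]}) :
  (p \mPo t1) \mPo t2 = p \mPo [tuple tnth t1 i \mPo t2 | i < n].
Proof.
rewrite [p \mPo t1]comp_mpolyEX [RHS]comp_mpolyEX raddf_sum; apply: eq_bigr => m _ /=.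
rewrite comp_mpolyZ !comp_mpolyX rmorph_prod; congr (_ *: _); apply: eq_bigr => i _.
by rewrite rmorphXn tnth_mktuple.
Qed.

Lemma comp_mpolyXt n k (t : n.-tuple {mpoly R[k]}) i : 'X_i \mPo t = tnth t i.
Proof. by rewrite comp_mpolyXU -tnth_nth. Qed.

Lemma comp_mpolyCM n k (c : R) (p : {mpoly R[n]}) (t : n.-tuple {mpoly R[k]}) :
  (c%:MP * p) \mPo t = c%:MP * (p \mPo t).
Proof. by rewrite rmorphM /= comp_mpolyC. Qed.

Definition diag_subst n (c : 'I_n -> R) : n.-tuple {mpoly R[n]} :=
  [tuple (c i)%:MP * 'X_i | i < n].

Lemma comp_diag_substX n (c : 'I_n -> R) m :
  'X_[m] \mPo diag_subst c = (\prod_i c i ^+ m i)%:MP * 'X_[m].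
Proof.
rewrite comp_mpolyX mpolyXE_id rmorph_prod -big_split /=; apply: eq_bigr => i _.
by rewrite tnth_mktuple exprMn rmorphXn.
Qed.

Lemma mcoeff_comp_diag_subst n (p : {mpoly R[n]}) (c : 'I_n -> R) m :
  (p \mPo diag_subst c)@_m = (\prod_i c i ^+ m i) * p@_m.
Proof.
rewrite comp_mpolyEX raddf_sum /=.
under eq_bigr => m' _ do rewrite mcoeffZ comp_diag_substX mcoeffCM mcoeffX.
have [m_p|m_np] := boolP (m \in msupp p); last first.
  rewrite (memN_msupp_eq0 m_np) mulr0 big1_seq // => m' m'_p.
  by rewrite (_ : m' == m = false) ?mulr0 //; apply: contraNF m_np => /eqP <-.
rewrite (bigD1_seq _ m_p (msupp_uniq p)) /= eqxx mulr1 [X in _ + X]big1 ?addr0 1?mulrC //.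
by move=> m' /negbTE ->; rewrite !mulr0.
Qed.

Lemma diag_subst_comp n k (c : 'I_n -> R) (t : n.-tuple {mpoly R[k]}) :
  [tuple tnth (diag_subst c) j \mPo t | j < n] = [tuple (c j)%:MP * tnth t j | j < n].
Proof.
by apply: eq_from_tnth => j; rewrite !tnth_mktuple comp_mpolyCM comp_mpolyXt.
Qed.

Lemma comp_diag_substK n (c e : 'I_n -> R) : (forall j, c j * e j = 1) ->
  cancel (comp_mpoly (diag_subst c)) (comp_mpoly (diag_subst e)).
Proof.
move=> ce1 p; rewrite comp_mpolyA diag_subst_comp -[RHS]comp_mpoly_id; congr (p \mPo _).
by apply: eq_from_tnth => j; rewrite !tnth_mktuple mulrA -mpolyCM ce1 mul1r.
Qed.

Lemma prod_exp_mdeg n (c : R) (m : 'X_{1..n}) : \prod_i c ^+ m i = c ^+ mdeg m.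
Proof. by rewrite prodrXr mdegE. Qed.

Lemma mdeg_mnm k s : mdeg (mnm k s) = (\sum_(i < k) nth 0 s i)%N.
Proof. by rewrite mdegE; apply: eq_bigr => i _; rewrite mnmE. Qed.

Lemma lsubstZ k (lam : R) (B : 'M[R]_k) :
  lsubst (lam *: B) = [tuple tnth (lsubst B) j \mPo diag_subst (fun _ => lam) | j < k].
Proof.
apply: eq_from_tnth => j; rewrite !tnth_mktuple raddf_sum; apply: eq_bigr => i _ /=.
by rewrite comp_mpolyCM comp_mpolyXt tnth_mktuple mxE mpolyCM mulrCA mulrA.
Qed.

Lemma mcoeff_comp_lsubstZ k (lam : R) (B : 'M[R]_k) (p : {mpoly R[k]}) m :
  (p \mPo lsubst (lam *: B))@_m = lam ^+ mdeg m * (p \mPo lsubst B)@_m.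
Proof. by rewrite lsubstZ -comp_mpolyA mcoeff_comp_diag_subst prod_exp_mdeg. Qed.

End Substitutions.

Lemma unitmx_det1_scale (L : closedFieldType) k (B : 'M[L]_k.+1) : B \in unitmx ->
  exists lam B0, [/\ B = lam *: B0, lam != 0, lam ^+ k.+1 = \det B & \det B0 = 1].
Proof.
rewrite unitmxE unitfE => detB_neq0.
have [lam lamE] := closed_field_root (\det B) (ltn0Sn k).
have lam_neq0 : lam != 0 by apply: contraNneq detB_neq0 => lam0; rewrite -lamE lam0 expr0n.
exists lam, (lam^-1 *: B); split => //; last by rewrite detZ exprVn lamE mulVf.
by rewrite scalerA divff ?scale1r.
Qed.

Lemma det1_unitmx (R : comUnitRingType) k (B : 'M[R]_k) : \det B = 1 -> B \in unitmx.
Proof. by rewrite unitmxE => ->; apply: unitr1. Qed.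

Definition diag_head (R : nzRingType) k (x y : R) : 'M[R]_k.+1 :=
  diag_mx (\row_i (if i == ord0 then x else y)).

Lemma det_diag_head (R : comNzRingType) k (x y : R) : \det (diag_head k x y) = x * y ^+ k.
Proof.
rewrite det_diag big_ord_recl !mxE eqxx; congr (_ * _).
by rewrite -[in RHS](card_ord k) -prodr_const; apply: eq_bigr => i _; rewrite mxE.
Qed.

Section Model1.
Variable L : closedFieldType.

Definition subst1 (u r s t : L) : 2.-tuple {mpoly L[2]} :=
  [tuple (u ^+ 2)%:MP * 'X_(o 0) + r%:MP;
         (u ^+ 3)%:MP * 'X_(o 1) + (u ^+ 2 * s)%:MP * 'X_(o 0) + t%:MP].

Definition coefs1 (W : {mpoly L[2]}) (i : 'I_5) : L :=
  nth 0 [:: W@_(mnm 2 [:: 1; 1]%N); - W@_(mnm 2 [:: 2]%N); W@_(mnm 2 [:: 0; 1]%N);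
            - W@_(mnm 2 [:: 1]%N); - W@_(mnm 2 [::])] i.

Lemma act1E u r s t a i :
  act1 (G1 u r s t) a i = coefs1 (u ^- 6 *: (W1 a \mPo subst1 u r s t)) i.
Proof. by []. Qed.

Definition diag2 (x y : L) (j : 'I_2) : L := if val j == 0%N then x else y.

(* [x ^ i y ^ j] is scaled by [u ^+ (2 i + 3 j)]; on the five extracted monomials,
   together with [u ^- 6], this gives [u ^- weights1 k]. *)
Lemma coefs1_diag (u : L) W i : u != 0 ->
  coefs1 (u ^- 6 *: (W \mPo diag_subst (diag2 (u ^+ 2) (u ^+ 3)))) i =
  u ^- weights1 i * coefs1 W i.
Proof.
move=> u_neq0; case: i => [[|[|[|[|[|//]]]]] i_lt];
  rewrite /coefs1 /= ?mcoeffN mcoeffZ mcoeff_comp_diag_subst !big_ord_recr big_ord0 /=;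
  rewrite !mnmE /diag2 /=; field; by rewrite ?expf_neq0.
Qed.

Lemma subst1_diag u r s t : subst1 u r s t =
  [tuple tnth (subst1 1 r s t) j \mPo diag_subst (diag2 (u ^+ 2) (u ^+ 3)) | j < 2].
Proof.
apply: eq_from_tnth => j; rewrite tnth_mktuple; case: j => [[|[|//]] j_lt];
  rewrite !(tnth_nth 0) /= !(comp_mpolyD, comp_mpolyCM, comp_mpolyC, comp_mpolyXt);
  by rewrite !tnth_mktuple /diag2 /= !inordK // !expr1n !mul1r ?mpolyCM; ring.
Qed.

Lemma act1_scalar (u r s t : L) a i : u != 0 ->
  act1 (G1 u r s t) a i = u ^- weights1 i * act1 (G1 1 r s t) a i.
Proof.
by move=> u_neq0; rewrite !act1E subst1_diag -comp_mpolyA coefs1_diag // expr1n invr1 scale1r.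
Qed.

Lemma W1_scale (c : L) a :
  W1 (fun i => c ^+ weights1 i * a i) \mPo diag_subst (diag2 (c ^+ 2) (c ^+ 3)) =
  c ^+ 6 *: W1 a.
Proof.
have weightsE k : (k < 5)%N -> weights1 (o k) = nth 0%N [:: 1; 2; 3; 4; 6]%N k.
  by move=> k_lt; rewrite /weights1 inordK.
rewrite /W1 !(rmorphB, rmorphD, rmorphM, rmorphXn) /= !comp_mpolyC !comp_mpolyXt.
by rewrite !tnth_mktuple /diag2 !weightsE //= !inordK //= -mul_mpolyC; ring.
Qed.

Lemma subst1_comp (e r s t : L) :
  [tuple tnth (diag_subst (diag2 (e ^+ 2) (e ^+ 3))) j \mPo subst1 1 r s t | j < 2] =
  subst1 e (r * e ^+ 2) (s * e) (t * e ^+ 3).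
Proof.
rewrite diag_subst_comp; apply: eq_from_tnth => j; rewrite tnth_mktuple.
by case: j => [[|[|//]] j_lt]; rewrite /tnth /= /diag2 /= ?mpolyCM; ring.
Qed.

Lemma act1_conj (c r s t : L) a i : c != 0 ->
  act1 (G1 1 (r * c ^+ 2) (s * c) (t * c ^+ 3)) (fun j => c ^+ weights1 j * a j) i =
  c ^+ weights1 i * act1 (G1 1 r s t) a i.
Proof.
move=> c_neq0; set e := c^-1.
have ce j : diag2 (c ^+ 2) (c ^+ 3) j * diag2 (e ^+ 2) (e ^+ 3) j = 1.
  by rewrite /diag2; case: ifP => _; rewrite -exprMn divff // expr1n.
have cwE : c ^+ weights1 i = e ^- weights1 i by rewrite /e exprVn invrK.
have c6E : c ^+ 6 = e ^- 6 by rewrite /e exprVn invrK.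
have ceK k (x : L) : x * c ^+ k * e ^+ k = x by rewrite -mulrA -exprMn divff // expr1n mulr1.
rewrite cwE -act1_scalar; last by rewrite invr_eq0.
rewrite !act1E -[W1 _](comp_diag_substK ce) W1_scale expr1n invr1 scale1r.
rewrite !comp_mpolyZ comp_mpolyA subst1_comp c6E.
by rewrite !ceK -mulrA divff ?mulr1.
Qed.

Lemma weighted_model1 : weighted_model (setting L 1).
Proof.
split => //=.
- by move=> [u r s t]; rewrite /Defs.big1 /comm1 /Defs.det1 /= => /andP[-> /eqP ->]; rewrite invr1.
- move=> t t_neq0; exists (G1 t^-1 0 0 0); by rewrite /Defs.big1 /Defs.det1 /= ?invr_eq0 ?invrK.
- move=> [u r s t] u_neq0.
  exists u^-1, (G1 1 r s t); split => //.
  + by rewrite /Defs.big1 /comm1 /= oner_neq0 eqxx.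
  + by move=> a i; rewrite act1_scalar // exprVn.
- by left.
- move=> [u r s t] c; rewrite /Defs.big1 /comm1 /= => /andP[_ /eqP ->] c_neq0.
  exists (G1 1 (r * c ^+ 2) (s * c) (t * c ^+ 3)).
    by rewrite /Defs.big1 /comm1 /= oner_neq0 eqxx.
  by move=> a i; apply: act1_conj.
Qed.

End Model1.

Section Model2.
Variable L : closedFieldType.

Definition subst2 (mu r0 r1 r2 : L) (B : 'M[L]_2) : 3.-tuple {mpoly L[3]} :=
  [tuple (B (o 0) (o 0))%:MP * 'X_(o 0) + (B (o 1) (o 0))%:MP * 'X_(o 1);
         (B (o 0) (o 1))%:MP * 'X_(o 0) + (B (o 1) (o 1))%:MP * 'X_(o 1);
         (mu^-1)%:MP * 'X_(o 2) + r0%:MP * 'X_(o 0) ^+ 2 + r1%:MP * 'X_(o 0) * 'X_(o 1)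
           + r2%:MP * 'X_(o 1) ^+ 2].

Definition coefs2 (W : {mpoly L[3]}) (i : 'I_8) : L :=
  nth 0 [:: W@_(mnm 3 [:: 2; 0; 1]%N); W@_(mnm 3 [:: 1; 1; 1]%N);
            W@_(mnm 3 [:: 0; 2; 1]%N); - W@_(mnm 3 [:: 4; 0; 0]%N);
            - W@_(mnm 3 [:: 3; 1; 0]%N); - W@_(mnm 3 [:: 2; 2; 0]%N);
            - W@_(mnm 3 [:: 1; 3; 0]%N); - W@_(mnm 3 [:: 0; 4; 0]%N)] i.

Lemma act2E (mu r0 r1 r2 : L) B a i :
  act2 (G2 mu r0 r1 r2 B) a i = coefs2 (mu ^+ 2 *: (W2 a \mPo subst2 mu r0 r1 r2 B)) i.
Proof. by []. Qed.

Definition diag3 (x y z : L) (j : 'I_3) : L :=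
  if val j == 0%N then x else if val j == 1%N then y else z.

(* [x ^ i z ^ j y ^ k] is scaled by [lam ^+ (i + j) * mu ^- k]; on the extracted
   monomials, together with [mu ^+ 2], this gives [(mu * lam ^+ 2) ^+ weights2 l]. *)
Lemma coefs2_diag (lam mu : L) W i : mu != 0 ->
  coefs2 (mu ^+ 2 *: (W \mPo diag_subst (diag3 lam lam mu^-1))) i =
  (mu * lam ^+ 2) ^+ weights2 i * coefs2 W i.
Proof.
move=> mu_neq0; case: i => [[|[|[|[|[|[|[|[|//]]]]]]]] i_lt];
  rewrite /coefs2 /= ?mcoeffN mcoeffZ mcoeff_comp_diag_subst !big_ord_recr big_ord0 /=;
  rewrite !mnmE /diag3 /=; field; by rewrite ?expf_neq0.
Qed.

Lemma subst2_diag (mu lam r0 r1 r2 : L) B :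
  subst2 mu (r0 * lam ^+ 2) (r1 * lam ^+ 2) (r2 * lam ^+ 2) (lam *: B) =
  [tuple tnth (subst2 1 r0 r1 r2 B) j \mPo diag_subst (diag3 lam lam mu^-1) | j < 3].
Proof.
apply: eq_from_tnth => j; rewrite tnth_mktuple.
case: j => [[|[|[|//]]] j_lt]; rewrite !(tnth_nth 0) /= ?mxE ?invr1 ?mpolyC1 ?mul1r;
  rewrite !(comp_mpolyD, comp_mpolyCM, rmorphXn, rmorphM) /= !(comp_mpolyC, comp_mpolyXt);
  rewrite !tnth_mktuple /diag3 /= !inordK // ?mpolyCM; ring.
Qed.

Lemma act2_scalar (mu lam r0 r1 r2 : L) B a i : mu != 0 ->
  act2 (G2 mu (r0 * lam ^+ 2) (r1 * lam ^+ 2) (r2 * lam ^+ 2) (lam *: B)) a i =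
  (mu * lam ^+ 2) ^+ weights2 i * act2 (G2 1 r0 r1 r2 B) a i.
Proof.
by move=> mu_neq0; rewrite !act2E subst2_diag -comp_mpolyA coefs2_diag // expr1n scale1r.
Qed.

Lemma W2_scale (c : L) a :
  W2 (fun i => c ^+ weights2 i * a i) \mPo diag_subst (diag3 1 1 c) = c ^+ 2 *: W2 a.
Proof.
have weightsE k : (k < 8)%N -> weights2 (o k) = nth 0%N [:: 1; 1; 1; 2; 2; 2; 2; 2]%N k.
  by move=> k_lt; rewrite /weights2 inordK.
rewrite /W2 !(rmorphB, rmorphD, rmorphM, rmorphXn) /= !comp_mpolyC !comp_mpolyXt.
by rewrite !tnth_mktuple /diag3 !weightsE //= !inordK //= -mul_mpolyC; ring.
Qed.

Lemma subst2_comp (c r0 r1 r2 : L) B : c != 0 ->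
  [tuple tnth (diag_subst (diag3 1 1 c^-1)) j \mPo subst2 1 (c * r0) (c * r1) (c * r2) B | j < 3]
  = subst2 c r0 r1 r2 B.
Proof.
move=> c_neq0; have cK : c%:MP * (c^-1)%:MP = 1 :> {mpoly L[3]} by rewrite -mpolyCM divff.
rewrite diag_subst_comp; apply: eq_from_tnth => j; rewrite tnth_mktuple.
case: j => [[|[|[|//]]] j_lt]; rewrite /tnth /= /diag3 /= ?invr1 ?mpolyC1 ?mul1r //.
by rewrite !mpolyCM; ring: cK.
Qed.

Lemma act2_conj (c r0 r1 r2 : L) B a i : c != 0 ->
  act2 (G2 1 (c * r0) (c * r1) (c * r2) B) (fun j => c ^+ weights2 j * a j) i =
  c ^+ weights2 i * act2 (G2 1 r0 r1 r2 B) a i.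
Proof.
move=> c_neq0.
have ce j : diag3 1 1 c j * diag3 1 1 c^-1 j = 1.
  by rewrite /diag3; case: ifP => _; [|case: ifP => _]; rewrite ?mulr1 ?divff.
have := act2_scalar 1 r0 r1 r2 B a i c_neq0; rewrite expr1n !mulr1 scale1r => <-.
rewrite !act2E -[W2 _](comp_diag_substK ce) W2_scale expr1n scale1r.
by rewrite !comp_mpolyZ comp_mpolyA subst2_comp.
Qed.

Lemma weighted_model2 : weighted_model (setting L 2).
Proof.
split => //=.
- move=> [mu r0 r1 r2 B]; rewrite /big2 /comm2 /det2 /= => /andP[_ /andP[/eqP -> /eqP dB]].
  by rewrite oner_neq0 det1_unitmx // dB mulr1.
- move=> t t_neq0; exists (G2 t 0 0 0 1); by rewrite /big2 /det2 /= ?t_neq0 ?unitmx1 ?det1 ?mulr1.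
- move=> [mu r0 r1 r2 B] /andP[mu_neq0 B_unit].
  have [lam [B0 [-> lam_neq0 lamE B0_det]]] := unitmx_det1_scale (B_unit : B \in unitmx).
  have lam2_neq0 : lam ^+ 2 != 0 by rewrite expf_neq0.
  pose rescale x := x / lam ^+ 2.
  exists (mu * lam ^+ 2), (G2 1 (rescale r0) (rescale r1) (rescale r2) B0); split.
  + by rewrite /big2 /comm2 /= oner_neq0 det1_unitmx // B0_det eqxx.
  + by rewrite expr1 /det2 /= lamE.
  + by move=> a i; rewrite -act2_scalar /rescale ?divfK.
- by left.
- move=> [mu r0 r1 r2 B] c; rewrite /big2 /comm2 /= => /andP[/andP[_ B_unit] /andP[/eqP -> dB]].
  move=> c_neq0; exists (G2 1 (c * r0) (c * r1) (c * r2) B).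
    by rewrite /big2 /comm2 /= oner_neq0 B_unit dB eqxx.
  by move=> a i; apply: act2_conj.
Qed.

End Model2.

Section Model3.
Variable L : closedFieldType.

Lemma mdeg_mons3 (i : 'I_10) : mdeg (mnm 3 (nth [::] mons3 i)) = 3%N.
Proof.
rewrite mdeg_mnm !big_ord_recr big_ord0 /=; apply/eqP.
have /allP : all (fun s => nth 0 s 0 + nth 0 s 1 + nth 0 s 2 == 3)%N mons3 by [].
by apply; rewrite mem_nth.
Qed.

Lemma act3_scalemx (mu lam : L) B a i :
  act3 (G3 mu (lam *: B)) a i = mu * lam ^+ 3 * act3 (G3 1 B) a i.
Proof. by rewrite /act3 /= !mcoeffZ mcoeff_comp_lsubstZ mdeg_mons3 mul1r mulrA. Qed.

Lemma act3_scale_coefs (g : grp3 L) (c : L) a i :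
  act3 g (fun j => c * a j) i = c * act3 g a i.
Proof.
have cubicZ : cubic (fun j => c * a j) = c *: cubic a.
  by rewrite /cubic scaler_sumr; apply: eq_bigr => j _; rewrite mpolyCM -mulrA mul_mpolyC.
by rewrite /act3 cubicZ comp_mpolyZ scalerA mulrC -scalerA mcoeffZ.
Qed.

Lemma weighted_model3 : weighted_model (setting L 3).
Proof.
split => //=.
- move=> [mu B]; rewrite /big3 /comm3 /det3 /= => /andP[-> /andP[/eqP -> /eqP ->]].
  by rewrite mulr1.
- move=> t t_neq0; exists (G3 t 1); by rewrite /big3 /det3 /= ?t_neq0 ?unitmx1 ?det1 ?mulr1.
- move=> [mu B]; rewrite /big3 /= => /andP[_ /unitmx_det1_scale[lam [B0 [-> _ lamE B0_det]]]].
  exists (mu * lam ^+ 3), (G3 1 B0); split.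
  + by rewrite /big3 /comm3 /= oner_neq0 det1_unitmx // B0_det eqxx.
  + by rewrite /det3 /= lamE expr1.
  + by move=> a i; rewrite expr1 act3_scalemx.
- by left.
- by move=> h c h_comm _; exists h => // a i; apply: act3_scale_coefs.
Qed.

End Model3.

Section Model4.
Variable L : closedFieldType.

Lemma mdeg_mons4 (i : nat) : (i < 10)%N -> mdeg (mnm 4 (nth [::] mons4 i)) = 2%N.
Proof.
move=> i_lt; rewrite mdeg_mnm !big_ord_recr big_ord0 /=; apply/eqP.
have /allP : all (fun s => nth 0 s 0 + nth 0 s 1 + nth 0 s 2 + nth 0 s 3 == 2)%N mons4 by [].
by apply; rewrite mem_nth.
Qed.

Lemma act4E (g : grp4 L) a c : act4 g a c =
  ((\sum_(j < 2) g4A g (inord (c %/ 10)) j *: qform a j) \mPo lsubst (g4B g))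
    @_(mnm 4 (nth [::] mons4 (c %% 10))).
Proof.
rewrite /act4 (raddf_sum (comp_mpoly _)).
by under [in RHS]eq_bigr do rewrite /= comp_mpolyZ -mul_mpolyC.
Qed.

Lemma act4_scalemx (al be : L) A B a c :
  act4 (G4 (al *: A) (be *: B)) a c = al * be ^+ 2 * act4 (G4 A B) a c.
Proof.
rewrite !act4E /= mcoeff_comp_lsubstZ mdeg_mons4 ?ltn_mod //.
under eq_bigr do rewrite mxE -scalerA.
by rewrite -scaler_sumr comp_mpolyZ mcoeffZ mulrCA mulrA.
Qed.

Lemma act4_scale_coefs (g : grp4 L) (c : L) a i :
  act4 g (fun j => c * a j) i = c * act4 g a i.
Proof.
have qformZ l : qform (fun j => c * a j) l = c *: qform a l.
  by rewrite /qform scaler_sumr; apply: eq_bigr => j _; rewrite mpolyCM -mulrA mul_mpolyC.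
rewrite !act4E -mcoeffZ -comp_mpolyZ scaler_sumr; congr (_ \mPo _)@_ _.
by apply: eq_bigr => j _; rewrite qformZ scalerA mulrC -scalerA.
Qed.

Lemma act4_diag (d : 'rV[L]_2) B a c :
  act4 (G4 (diag_mx d) B) a c = d 0 (inord (c %/ 10)) * act4 (G4 1%:M B) a c.
Proof.
set l : 'I_2 := inord (c %/ 10).
have sum_diag (A : 'M[L]_2) : (forall j, j != l -> A l j = 0) ->
    \sum_(j < 2) A l j *: qform a j = A l l *: qform a l.
  by move=> A0; rewrite (bigD1 l) //= big1 ?addr0 // => j /A0 ->; rewrite scale0r.
have diag_d j : j != l -> diag_mx d l j = 0.
  by rewrite mxE eq_sym => /negbTE->; rewrite mulr0n.
have diag_1 j : j != l -> (1%:M : 'M[L]_2) l j = 0 by rewrite mxE eq_sym => /negbTE->.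
rewrite !act4E /= -/l (sum_diag _ diag_d) (sum_diag _ diag_1).
by rewrite !mxE eqxx mulr1n scale1r comp_mpolyZ mcoeffZ.
Qed.

Lemma weighted_model4 : weighted_model (setting L 4).
Proof.
split => //=.
- move=> [A B]; rewrite /big4 /comm4 /det4 /= => /andP[_ /andP[/eqP dA /eqP dB]].
  by rewrite !det1_unitmx // dA dB mulr1.
- move=> t t_neq0; exists (G4 (diag_head 1 t 1) 1).
    by rewrite /big4 /= unitmx1 andbT unitmxE det_diag_head expr1n mulr1 unitfE.
  by rewrite /det4 /= det_diag_head det1 expr1n !mulr1.
- move=> [A B]; rewrite /big4 /= => /andP[/unitmx_det1_scale[al [A0 [-> _ alE A0_det]]]].
  move=> /unitmx_det1_scale[be [B0 [-> _ beE B0_det]]].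
  exists (al * be ^+ 2), (G4 A0 B0); split.
  + by rewrite /big4 /comm4 /= !det1_unitmx // A0_det B0_det eqxx.
  + by rewrite /det4 /= exprMn -exprM alE beE.
  + by move=> a i; rewrite expr1 act4_scalemx.
- right; exists 1%N => // a.
  exists (fun i : 'I_20 => nat_of_bool (i %/ 10 == 0)%N), (act4 (G4 1 1) a).
  move=> s s_neq0; exists (G4 (diag_head 1 s s^-1) 1).
    by rewrite /big4 /comm4 /= !det1_unitmx ?det1 ?det_diag_head ?divff ?expr1 ?eqxx.
  move=> i; rewrite !expr1 act4_diag mxE mulrA; congr (_ * _).
  have i_lt : (i %/ 10 < 2)%N by rewrite ltn_divLR.
  by rewrite -val_eqE /= inordK //; case: (_ == _); rewrite ?expr1 ?expr0 ?divff.
- by move=> h c h_comm _; exists h => // a i; apply: act4_scale_coefs.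
Qed.

End Model4.

Section Model5.
Variable L : closedFieldType.
Local Notation cst := (fun e : L => e%:MP_[5]).

Definition alt_sandwich (A : 'M[L]_5) a : 'M[{mpoly L[5]}]_5 :=
  map_mx cst A *m altmx a *m (map_mx cst A)^T.

Definition pair5_fst (c : 'I_50) : 'I_5 := inord (nth (0, 0)%N pairs5 (c %/ 5)).1.
Definition pair5_snd (c : 'I_50) : 'I_5 := inord (nth (0, 0)%N pairs5 (c %/ 5)).2.

Lemma act5E (g : grp5 L) a c : act5 g a c =
  (alt_sandwich (g5A g) a (pair5_fst c) (pair5_snd c) \mPo lsubst (g5B g))
    @_(U_(inord (c %% 5)))%MM.
Proof.
rewrite /act5 /alt_sandwich /=; set t := lsubst _.
have const_fixed (A : 'M[L]_5) : map_mx (comp_mpoly t) (map_mx cst A) = map_mx cst A.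
  by apply/matrixP => i j; rewrite !mxE comp_mpolyC.
have entry (M : 'M[{mpoly L[5]}]_5) i j : M i j \mPo t = map_mx (comp_mpoly t) M i j.
  by rewrite mxE.
by rewrite entry !map_mxM !map_trmx !const_fixed.
Qed.

Lemma alt_sandwichZ (al : L) A a :
  alt_sandwich (al *: A) a = (al ^+ 2)%:MP *: alt_sandwich A a.
Proof.
have cstZ : map_mx cst (al *: A) = al%:MP *: map_mx cst A.
  by apply/matrixP => i j; rewrite !mxE mpolyCM.
by rewrite /alt_sandwich cstZ linearZ /= -scalemxAl -scalemxAr -scalemxAl scalerA -mpolyCM.
Qed.

Lemma act5_scalemx (al be : L) A B a c :
  act5 (G5 (al *: A) (be *: B)) a c = al ^+ 2 * be * act5 (G5 A B) a c.
Proof.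
rewrite !act5E /= mcoeff_comp_lsubstZ mdeg1 alt_sandwichZ mxE mul_mpolyC comp_mpolyZ mcoeffZ.
by rewrite mulrCA mulrA.
Qed.

Lemma act5_scale_coefs (g : grp5 L) (c : L) a i :
  act5 g (fun j => c * a j) i = c * act5 g a i.
Proof.
have altmxZ : altmx (fun j => c * a j) = c%:MP *: altmx a.
  have linfZ p : linf (fun j => c * a j) p = c%:MP * linf a p.
    by rewrite /linf mulr_sumr; apply: eq_bigr => j _; rewrite mpolyCM mulrA.
  apply/matrixP => k l; rewrite !mxE.
  by case: ifP => _; [|case: ifP => _]; rewrite ?linfZ ?mulrN ?mulr0.
rewrite !act5E /alt_sandwich altmxZ -scalemxAr -scalemxAl mxE mul_mpolyC.
by rewrite comp_mpolyZ mcoeffZ.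
Qed.

Lemma alt_sandwich_diag (d : 'rV[L]_5) a i j :
  alt_sandwich (diag_mx d) a i j = (d 0 i * d 0 j) *: alt_sandwich 1%:M a i j.
Proof.
have map_diag (e : 'rV[L]_5) : map_mx cst (diag_mx e) = diag_mx (map_mx cst e).
  by apply/matrixP => k l; rewrite !mxE mpolyCMn.
rewrite /alt_sandwich -(diag_const_mx 5 (1 : L)) !map_diag !tr_diag_mx; set X := altmx a.
by rewrite !mul_mx_diag !mul_diag_mx !mxE mpolyC1 mul1r mulr1 -mul_mpolyC mpolyCM mulrAC.
Qed.

Lemma act5_diag (d : 'rV[L]_5) B a c :
  act5 (G5 (diag_mx d) B) a c = d 0 (pair5_fst c) * d 0 (pair5_snd c) * act5 (G5 1%:M B) a c.
Proof. by rewrite !act5E /= alt_sandwich_diag comp_mpolyZ mcoeffZ. Qed.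

Lemma weighted_model5 : weighted_model (setting L 5).
Proof.
split => //=.
- move=> [A B]; rewrite /big5 /comm5 /det5 /= => /andP[_ /andP[/eqP dA /eqP dB]].
  by rewrite !det1_unitmx // dA dB expr1n mulr1.
- move=> t t_neq0; exists (G5 1 (diag_head 4 t 1)).
    by rewrite /big5 /= unitmx1 unitmxE det_diag_head expr1n mulr1 unitfE.
  by rewrite /det5 /= det_diag_head det1 !expr1n mul1r mulr1.
- move=> [A B]; rewrite /big5 /= => /andP[/unitmx_det1_scale[al [A0 [-> _ alE A0_det]]]].
  move=> /unitmx_det1_scale[be [B0 [-> _ beE B0_det]]].
  exists (al ^+ 2 * be), (G5 A0 B0); split.
  + by rewrite /big5 /comm5 /= !det1_unitmx // A0_det B0_det eqxx.
  + by rewrite /det5 /= exprMn -exprM mulnC exprM alE beE.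
  + by move=> a i; rewrite expr1 act5_scalemx.
- right; exists 2%N => // a.
  exists (fun c => nat_of_bool (pair5_fst c == ord0) + nat_of_bool (pair5_snd c == ord0))%N.
  exists (act5 (G5 1 1) a) => s s_neq0; exists (G5 (diag_head 4 (s ^+ 4) s^-1) 1).
    by rewrite /big5 /comm5 /= !det1_unitmx ?det1 ?det_diag_head ?exprVn ?divff ?expf_neq0 ?eqxx.
  move=> i; rewrite expr1 act5_diag !mxE exprD mulrA; congr (_ * _).
  have sE (j : 'I_5) : s * (if j == ord0 then s ^+ 4 else s^-1) = (s ^+ 5) ^+ (j == ord0).
    by case: (j == ord0); rewrite ?expr1 ?expr0 ?exprS ?divff.
  by rewrite expr2 mulrACA !sE.
- by move=> h c h_comm _; exists h => // a i; apply: act5_scale_coefs.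
Qed.

End Model5.

Lemma weighted_model_setting (L : closedFieldType) n :
  (1 <= n <= 5)%N -> weighted_model (setting L n).
Proof.
case: n => [|[|[|[|[|[|n]]]]]] // _.
- exact: weighted_model1.
- exact: weighted_model2.
- exact: weighted_model3.
- exact: weighted_model4.
- exact: weighted_model5.
Qed.

Unset Implicit Arguments.
Set Strict Implicit.

Theorem lemma4p3 (K : fieldType) (L : closedFieldType)
    (iota : {rmorphism K -> L})
    (K_perfect : perfect_field K) (L_alg : algebraic_over iota)
    (n : nat) (Hn : (1 <= n <= 5)%N) :
  let S := setting L n in
  (* every nonzero homogeneous invariant of degree d is an invariant of
     weight k, where d = gs_r S * k  (r = 1, 1, 1, 2, 5) *)
  (forall (d : nat) (F : {mpoly K[gs_N S]}),
      F \is d.-homog for (wmeasure (gs_w S)) -> is_Ginv iota S F -> F != 0 ->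
      exists k : nat, d = (gs_r S * k)%N /\ is_weight_inv iota S k F)
  (* K[X_n]^{G_n} = (+)_{k >= 0} K[X_n]^{G_n}_k : *)
  /\ (forall (k : nat) (F : {mpoly K[gs_N S]}),
        is_weight_inv iota S k F -> is_Ginv iota S F)
  /\ (forall F : {mpoly K[gs_N S]}, is_Ginv iota S F ->
        exists (M : nat) (Fk : nat -> {mpoly K[gs_N S]}),
          (forall k, is_weight_inv iota S k (Fk k)) /\
          F = \sum_(k < M) Fk k)
  /\ (forall (M : nat) (Fk : nat -> {mpoly K[gs_N S]}),
        (forall k, is_weight_inv iota S k (Fk k)) ->
        \sum_(k < M) Fk k = 0 -> forall k, (k < M)%N -> Fk k = 0).
Proof.
move=> S; have WS : weighted_model S := weighted_model_setting L Hn.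
split; first exact: homog_Ginv_weight WS.
split; first exact: weight_inv_Ginv WS.
split; first exact: Ginv_weight_decomposition WS.
exact: weight_invs_independent WS.
Qed.
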